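(* For every $n\ge4$, a relation on $\mathcal P$ is $\Sigma_n$-definable in $\mathbf Y^*=\langle\mathcal P,\le,[1]+[1]\rangle$ if and only if it is $\Sigma_n$-definable in $\langle\mathcal P,\le,\pi:\pi\in\mathcal P\rangle$.
   Context: $\mathcal P$ is the set of all integer partitions, including the empty partition; a partition is a nonincreasing finite sequence of positive integers. Young's lattice $\mathbf Y=\langle\mathcal P,\le\rangle$ has $(s_1,\dots,s_r)\le(n_1,\dots,n_t)$ iff $r\le t$ and $s_i\le n_i$ for all $i\le r$; $\mathbf Y^*$ is $\mathbf Y$ with a constant symbol for the partition $(1,1)$, and $\langle\mathcal P,\le,\pi:\pi\in\mathcal P\rangle$ is $\mathbf Y$ expanded by a constant symbol for every partition. A relation is $\Sigma_n$-definable in a structure if it is defined by a first-order formula in the structure's language in prenex form with $n$ alternating quantifier blocks, the outermost existential, and a quantifier-free matrix. *)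

From mathcomp Require Import all_boot.
Set Implicit Arguments. Unset Strict Implicit. Unset Printing Implicit Defensive.

Definition is_partition (s : seq nat) : bool :=
  sorted geq s && all (fun x => 0 < x) s.

Definition part := {s : seq nat | is_partition s}.

Definition part_le (a b : part) : Prop :=
  let s := proj1_sig a in let t := proj1_sig b in
  (size s <= size t) && all (fun i => nth 0 s i <= nth 0 t i) (iota 0 (size s)).

Definition part_empty : part := exist _ [::] erefl.
Definition part_11 : part := exist _ [:: 1; 1] erefl.

Inductive term (C : Type) : Type :=
  | TVar (i : nat)
  | TCst (c : C).

Inductive qf (C : Type) : Type :=
  | QLe (t1 t2 : term C)
  | QEq (t1 t2 : term C)
  | QNot (q : qf C)
  | QAnd (q1 q2 : qf C)
  | QOr (q1 q2 : qf C).

Inductive pform (C : Type) : Type :=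
  | PQF (q : qf C)
  | PEx (i : nat) (f : pform C)
  | PAll (i : nat) (f : pform C).

Arguments TVar {C}.
Arguments PQF {C}.

Definition is_qf C (f : pform C) : Prop :=
  match f with PQF _ => True | _ => False end.

Fixpoint exblock C (P : pform C -> Prop) (f : pform C) : Prop :=
  P f \/ match f with PEx _ g => exblock P g | _ => False end.
Fixpoint allblock C (P : pform C -> Prop) (f : pform C) : Prop :=
  P f \/ match f with PAll _ g => allblock P g | _ => False end.

Fixpoint is_sigma C (n : nat) (f : pform C) : Prop :=
  match n with
  | 0 => is_qf f
  | m.+1 => exblock (fun g => is_pi_aux m g) f
  end
with is_pi_aux C (n : nat) (f : pform C) : Prop :=
  match n with
  | 0 => is_qf f
  | m.+1 => allblock (fun g => is_sigma m g) f
  end.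

Definition term_free C (i : nat) (t : term C) : bool :=
  match t with TVar j => j == i | TCst _ => false end.

Fixpoint qf_free C (i : nat) (q : qf C) : bool :=
  match q with
  | QLe t1 t2 | QEq t1 t2 => term_free i t1 || term_free i t2
  | QNot q => qf_free i q
  | QAnd q1 q2 | QOr q1 q2 => qf_free i q1 || qf_free i q2
  end.

Fixpoint pform_free C (i : nat) (f : pform C) : bool :=
  match f with
  | PQF q => qf_free i q
  | PEx j g | PAll j g => (j != i) && pform_free i g
  end.

Section Sem.
Variables (C : Type) (I : C -> part).

Definition eval_term (v : nat -> part) (t : term C) : part :=
  match t with TVar i => v i | TCst c => I c end.

Fixpoint sat_qf (v : nat -> part) (q : qf C) : Prop :=
  match q with
  | QLe t1 t2 => part_le (eval_term v t1) (eval_term v t2)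
  | QEq t1 t2 => eval_term v t1 = eval_term v t2
  | QNot q => ~ sat_qf v q
  | QAnd q1 q2 => sat_qf v q1 /\ sat_qf v q2
  | QOr q1 q2 => sat_qf v q1 \/ sat_qf v q2
  end.

Definition upd (v : nat -> part) (i : nat) (a : part) : nat -> part :=
  fun j => if j == i then a else v j.

Fixpoint sat (v : nat -> part) (f : pform C) : Prop :=
  match f with
  | PQF q => sat_qf v q
  | PEx i g => exists a, sat (upd v i a) g
  | PAll i g => forall a, sat (upd v i a) g
  end.

(* valuation induced by a k-tuple (variables >= k are irrelevant, see below) *)
Definition tuple_val (k : nat) (a : 'I_k -> part) : nat -> part :=
  fun j => match insub j with Some j' => a j' | None => part_empty end.

Definition sigma_definable (n k : nat) (R : ('I_k -> part) -> Prop) : Prop :=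
  exists f : pform C,
    is_sigma n f /\ (forall i, pform_free i f -> i < k) /\
    forall a : 'I_k -> part, R a <-> sat (tuple_val a) f.
End Sem.

(* Y^* : one constant symbol, interpreted as (1,1) *)
Definition Ystar_const (_ : unit) : part := part_11.
(* Y expanded by a constant symbol for every partition *)
Definition Yall_const (p : part) : part := p.

(* One direction only renames the constant of Y^* as the constant (1,1).  For
   the other, every partition p is defined in Y^* by a formula of the shape
   "exists aux, forall a, Phi p" with Phi p quantifier-free: the partitions not
   above (1,1) are the rows and those not above the row (2) are the columns,
   both chains being recognised through the covering relation; the rectangle
   with i+1 rows of length p_i+1 is the greatest partition avoiding a row and a
   column; and p is the greatest partition avoiding these rectangles.  A
   Sigma_n formula with constants is translated by keeping its leading
   existential block, replacing each constant by a fresh variable, guessing all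
   auxiliary variables in one more existential block, and conjoining the
   defining formulas, with one shared universal probe, to the matrix; for
   n >= 2 the prefix remains Sigma_n. *)

From mathcomp Require Import all_boot zify.
From Stdlib Require Import Classical.
Set Implicit Arguments. Unset Strict Implicit. Unset Printing Implicit Defensive.

Definition part_nth (a : part) (i : nat) : nat := nth 0 (proj1_sig a) i.

Notation psize a := (size (proj1_sig a)).

Lemma part_nth_gt0 a i : (0 < part_nth a i) = (i < psize a).
Proof.
rewrite /part_nth; case: a => s /= /andP [_ pos_s].
case: (ltnP i (size s)) => lt_is; last by rewrite nth_default.
by move/allP: pos_s; apply; rewrite mem_nth.
Qed.

Lemma part_nth_mono a i j : i <= j -> part_nth a j <= part_nth a i.
Proof.
rewrite /part_nth; case: a => s /= /andP [sorted_s _] le_ij.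
case: (ltnP j (size s)) => lt_js; last by rewrite nth_default.
have geq_trans : transitive geq by move=> y x z /= le_yx le_zy; apply: leq_trans le_zy le_yx.
apply: (sorted_leq_nth geq_trans (fun x => leqnn x)) => //.
by rewrite inE (leq_ltn_trans le_ij).
Qed.
Arguments part_nth_mono a {i j}.

Lemma part_leP a b : part_le a b <-> forall i, part_nth a i <= part_nth b i.
Proof.
rewrite /part_le; split.
  move=> /andP [_ /allP le_ab] i.
  case: (ltnP i (psize a)) => lt_ia; first by apply: le_ab; rewrite mem_iota.
  by rewrite /part_nth nth_default.
move=> le_ab; apply/andP; split; last by apply/allP => i _; apply: le_ab.
rewrite leqNgt; apply/negP => lt_ba.
have := le_ab (psize b).
rewrite {2}/part_nth nth_default // leqn0 => /eqP nth0.
by move: lt_ba; rewrite -part_nth_gt0 nth0.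
Qed.

Lemma part_nth_inj a b : (forall i, part_nth a i = part_nth b i) -> a = b.
Proof.
move: a b => [s Hs] [t Ht] /= eq_st.
have [/andP [le_st _] /andP [le_ts _]] :
    part_le (exist _ s Hs) (exist _ t Ht) /\ part_le (exist _ t Ht) (exist _ s Hs).
  by split; apply/part_leP => i; rewrite eq_st.
have E : s = t.
  by apply: (eq_from_nth (x0 := 0)) => [|i _]; [apply/eqP; rewrite eqn_leq le_st | apply: eq_st].
by subst t; congr exist; apply: eq_irrelevance.
Qed.

Lemma part_le_refl a : part_le a a.
Proof. exact/part_leP. Qed.

Lemma part_le_trans a b c : part_le a b -> part_le b c -> part_le a c.
Proof. by move=> /part_leP ab /part_leP bc; apply/part_leP => i; apply: leq_trans (ab i) (bc i). Qed.

Lemma part_le_anti a b : part_le a b -> part_le b a -> a = b.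
Proof.
move=> /part_leP ab /part_leP ba; apply: part_nth_inj => i.
by apply/eqP; rewrite eqn_leq ab ba.
Qed.

Definition rect_seq (a b : nat) : seq nat := nseq (if b == 0 then 0 else a) b.

(* (Empty when [b = 0], so that every row has positive length.) *)
Lemma rect_is_partition a b : is_partition (rect_seq a b).
Proof.
rewrite /is_partition /rect_seq; case: b => [|b] //=; apply/andP; split.
  by elim: a => // [[|a]] //= IH; rewrite leqnn.
by apply/allP => x /nseqP [-> _].
Qed.

Definition rect (a b : nat) : part := exist _ (rect_seq a b) (rect_is_partition a b).

Lemma rect_nth a b i : part_nth (rect a b) i = if i < a then b else 0.
Proof. by rewrite /part_nth /= /rect_seq nth_nseq; case: b => [|b]; first by case: ifP. Qed.

Lemma rect_leP a b w : part_le (rect a.+1 b) w <-> b <= part_nth w a.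
Proof.
split; first by move=> /part_leP /(_ a); rewrite rect_nth ltnSn.
move=> le_bw; apply/part_leP => i; rewrite rect_nth; case: ifP => // lt_ia.
by apply: leq_trans le_bw (part_nth_mono w _); rewrite -ltnS.
Qed.

Lemma rect0l_le b w : part_le (rect 0 b) w.
Proof. by apply/part_leP => i; rewrite rect_nth. Qed.

Lemma part_11_rect : part_11 = rect 2 1.
Proof. by apply: part_nth_inj => [[|[|i]]]. Qed.

Definition part_lt a b := part_le a b /\ a <> b.
Definition covers a b := part_lt a b /\ forall w, ~ (part_lt a w /\ part_lt w b).

(* A chain [F 0 < F 1 < ...] forming exactly the set of partitions not above
   [e]: consecutive members cover each other, and [F b.+1] is the only cover of
   [F b] outside the up-set of [e].  This recognises rows and columns. *)
Section ChainBelow.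
Variables (F : nat -> part) (e : part).
Hypothesis F_le : forall i j, part_le (F i) (F j) <-> i <= j.
Hypothesis not_above_e : forall y, ~ part_le e y <-> exists k, y = F k.

Lemma chain_inj i j : F i = F j -> i = j.
Proof. by move=> E; apply/eqP; rewrite eqn_leq; apply/andP; split; apply/F_le; rewrite E; apply: part_le_refl. Qed.

Lemma chain_lt i j : part_lt (F i) (F j) <-> i < j.
Proof.
rewrite /part_lt F_le; split => [[le_ij neq_ij]|lt_ij].
  by rewrite ltn_neqAle le_ij andbT; apply/eqP => E; apply: neq_ij; rewrite E.
by split; [apply: ltnW | move/chain_inj => E; rewrite E ltnn in lt_ij].
Qed.

Lemma chain_covers b : covers (F b) (F b.+1).
Proof.
split => [|w [lt_bw lt_wb]]; first exact/chain_lt.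
have [k Ew] : exists k, w = F k.
  apply/not_above_e => le_ew; apply: (proj2 (not_above_e (F b.+1))); first by exists b.+1.
  exact: part_le_trans le_ew (proj1 lt_wb).
by move: lt_bw lt_wb; rewrite Ew => /chain_lt ? /chain_lt; lia.
Qed.

Lemma chain_cover_unique b y : covers (F b) y -> ~ part_le e y -> y = F b.+1.
Proof.
move=> [lt_by no_between] /not_above_e [k Ey]; subst y.
have lt_bk : b < k by apply/chain_lt.
have [lt_b1k|le_kb1] := ltnP b.+1 k; last by have -> : k = b.+1 by lia.
by case: (no_between (F b.+1)); split; apply/chain_lt.
Qed.
End ChainBelow.

Lemma row_le i j : part_le (rect 1 i) (rect 1 j) <-> i <= j.
Proof. by rewrite rect_leP rect_nth. Qed.

Lemma not_above_11 y : ~ part_le (rect 2 1) y <-> exists k, y = rect 1 k.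
Proof.
split => [|[k ->]]; last by rewrite rect_leP rect_nth.
rewrite rect_leP => /negP; rewrite -ltnNge ltnS leqn0 => /eqP y1.
exists (part_nth y 0); apply: part_nth_inj => -[|i]; rewrite rect_nth //=.
by apply/eqP; rewrite -leqn0 -y1 part_nth_mono.
Qed.

Lemma col_le i j : part_le (rect i 1) (rect j 1) <-> i <= j.
Proof.
case: i => [|i]; first by split => // _; apply: rect0l_le.
by rewrite rect_leP rect_nth; case: (i < j).
Qed.

Lemma not_above_2 y : ~ part_le (rect 1 2) y <-> exists k, y = rect k 1.
Proof.
split => [|[k ->]]; last by rewrite rect_leP rect_nth; case: ifP.
rewrite rect_leP => /negP; rewrite -ltnNge ltnS => y0.
exists (psize y); apply: part_nth_inj => i; rewrite rect_nth -part_nth_gt0.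
by have := leq_trans (part_nth_mono y (leq0n i)) y0; case: (part_nth y i) => [|[|]].
Qed.

Definition is_max (A : part -> Prop) x := A x /\ forall w, A w -> part_le w x.

Lemma is_max_unique A x y : is_max A x -> is_max A y -> x = y.
Proof. by move=> [Ax max_x] [Ay max_y]; apply: part_le_anti; [apply: max_y | apply: max_x]. Qed.

Definition avoids_rc a b w := ~ part_le (rect 1 b.+1) w /\ ~ part_le (rect a.+1 1) w.

Lemma rect_is_max a b : is_max (avoids_rc a b) (rect a b).
Proof.
rewrite /avoids_rc; split.
  by rewrite !rect_leP !rect_nth ltnn; split; [case: ifP => _; lia | by []].
move=> w []; rewrite !rect_leP => /negP w0 /negP wa.
move: w0 wa; rewrite -!ltnNge !ltnS => w0 wa.
apply/part_leP => i; rewrite rect_nth; case: ifP => lt_ia.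
  exact: leq_trans (part_nth_mono w (leq0n i)) w0.
by apply: leq_trans (part_nth_mono w _) wa; rewrite leqNgt lt_ia.
Qed.

(* Every partition [p] is the greatest partition avoiding the rectangles
   [rect i.+1 (p_i).+1] for [i <= size p] (the cells just outside [p]). *)
Definition avoids_corners p w :=
  forall i, i <= psize p -> ~ part_le (rect i.+1 (part_nth p i).+1) w.

Lemma part_is_max p : is_max (avoids_corners p) p.
Proof.
split=> [i _|w avoid_w]; first by rewrite rect_leP ltnn.
apply/part_leP => i; set s := psize p.
have [le_is|lt_si] := leqP i s; first by move: (avoid_w i le_is); rewrite rect_leP; lia.
have ps0 : part_nth p s = 0 by apply/eqP; rewrite -leqn0 leqNgt part_nth_gt0 ltnn.
move: (avoid_w s (leqnn s)); rewrite rect_leP ps0 => /negP; rewrite -ltnNge ltnS leqn0 => /eqP ws0.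
by apply: leq_trans (part_nth_mono w (ltnW lt_si)) _; rewrite ws0.
Qed.

Lemma upd_eq (v : nat -> part) i a : upd v i a i = a.
Proof. by rewrite /upd eqxx. Qed.

Lemma upd_ne (v : nat -> part) i a j : j != i -> upd v i a j = v j.
Proof. by rewrite /upd => /negbTE ->. Qed.

Fixpoint qmap C D (h : term C -> term D) (q : qf C) : qf D :=
  match q with
  | QLe t1 t2 => QLe (h t1) (h t2)
  | QEq t1 t2 => QEq (h t1) (h t2)
  | QNot q => QNot (qmap h q)
  | QAnd q1 q2 => QAnd (qmap h q1) (qmap h q2)
  | QOr q1 q2 => QOr (qmap h q1) (qmap h q2)
  end.

Fixpoint pfmap C D (h : qf C -> qf D) (f : pform C) : pform D :=
  match f with
  | PQF q => PQF (h q)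
  | PEx i g => PEx i (pfmap h g)
  | PAll i g => PAll i (pfmap h g)
  end.

Fixpoint qf_all C (P : term C -> Prop) (q : qf C) : Prop :=
  match q with
  | QLe t1 t2 | QEq t1 t2 => P t1 /\ P t2
  | QNot q => qf_all P q
  | QAnd q1 q2 | QOr q1 q2 => qf_all P q1 /\ qf_all P q2
  end.

Definition qf_vars_in C (S : nat -> Prop) (t : term C) := forall i, term_free i t -> S i.

Section QuantifierFree.
Variable C : Type.
Implicit Types (q : qf C) (P Q : term C -> Prop).

Lemma qf_all_impl P Q q : (forall t, P t -> Q t) -> qf_all P q -> qf_all Q q.
Proof. by move=> PQ; elim: q => /= [t1 t2|t1 t2|q IH|q1 IH1 q2 IH2|q1 IH1 q2 IH2]; intuition. Qed.

Lemma qf_allT P q : (forall t, P t) -> qf_all P q.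
Proof. by move=> allP; elim: q => /=; intuition. Qed.

Lemma qf_all_and P Q q : qf_all P q -> qf_all Q q -> qf_all (fun t => P t /\ Q t) q.
Proof. by elim: q => /= [t1 t2|t1 t2|q IH|q1 IH1 q2 IH2|q1 IH1 q2 IH2]; intuition. Qed.

Lemma qf_all_qmap D (h : term C -> term D) (P : term D -> Prop) q :
  qf_all (fun t => P (h t)) q -> qf_all P (qmap h q).
Proof. by elim: q => /= [t1 t2|t1 t2|q IH|q1 IH1 q2 IH2|q1 IH1 q2 IH2]; intuition. Qed.

Lemma qf_all_free q : qf_all (qf_vars_in (fun i => qf_free i q)) q.
Proof.
rewrite /qf_vars_in.
elim: q => /= [t1 t2|t1 t2|q IH|q1 IH1 q2 IH2|q1 IH1 q2 IH2] //.
1,2: by split=> i ->; rewrite ?orbT.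
all: by split; [apply: qf_all_impl IH1 | apply: qf_all_impl IH2] => t Ht i /Ht ->; rewrite ?orbT.
Qed.

Lemma qf_free_in (S : nat -> Prop) q : qf_all (qf_vars_in S) q -> forall i, qf_free i q -> S i.
Proof.
rewrite /qf_vars_in => all_q i.
elim: q all_q => /= [t1 t2|t1 t2|q IH|q1 IH1 q2 IH2|q1 IH1 q2 IH2] //.
1,2: by case=> vars1 vars2 /orP [/vars1|/vars2].
all: by case=> /IH1 free1 /IH2 free2 /orP [/free1|/free2].
Qed.

Lemma qmap_sat D (I : C -> part) (J : D -> part) (h : term C -> term D) u u' q :
  qf_all (fun t => eval_term J u (h t) = eval_term I u' t) q ->
  sat_qf J u (qmap h q) <-> sat_qf I u' q.
Proof.
elim: q => /= [t1 t2|t1 t2|q IH|q1 IH1 q2 IH2|q1 IH1 q2 IH2];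
  by [case=> -> -> | move/IH -> | case=> /IH1 -> /IH2 ->].
Qed.

Lemma qmap_id q : qmap id q = q.
Proof. by elim: q => /= [t1 t2|t1 t2|q ->|q1 -> q2 ->|q1 -> q2 ->]. Qed.

Lemma satq_agree (I : C -> part) u u' q :
  (forall i, qf_free i q -> u i = u' i) -> sat_qf I u q <-> sat_qf I u' q.
Proof.
move=> agree; rewrite -{1}(qmap_id q); apply: qmap_sat.
by apply: qf_all_impl (qf_all_free q) => -[j|c] //= /(_ j (eqxx j)) /agree.
Qed.
End QuantifierFree.

Lemma qmap_free_in C D (h : term C -> term D) (S : nat -> Prop) q :
  qf_all (fun t => qf_vars_in S (h t)) q -> forall i, qf_free i (qmap h q) -> S i.
Proof. by move=> all_q; apply: qf_free_in; apply: qf_all_qmap. Qed.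

Section Prenex.
Variable C : Type.
Implicit Types (f g : pform C).

Lemma sat_agree (I : C -> part) f u u' :
  (forall i, pform_free i f -> u i = u' i) -> sat I u f <-> sat I u' f.
Proof.
elim: f u u' => [q|j g IH|j g IH] u u' agree /=; first exact: satq_agree.
all: have agree_upd a : forall i, pform_free i g -> upd u j a i = upd u' j a i
       by move=> i free_i; rewrite /upd; case: eqP => // /eqP ne_ij;
          apply: agree; rewrite /= eq_sym ne_ij.
- by split=> -[a Ha]; exists a; [rewrite -(IH _ _ (agree_upd a)) | rewrite (IH _ _ (agree_upd a))].
- by split=> Ha a; [rewrite -(IH _ _ (agree_upd a)) | rewrite (IH _ _ (agree_upd a))].
Qed.

Lemma pfmap_sat D (I : C -> part) (J : D -> part) (h : qf C -> qf D) :
  (forall u q, sat_qf J u (h q) <-> sat_qf I u q) ->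
  forall f u, sat J u (pfmap h f) <-> sat I u f.
Proof.
move=> hP; elim=> [q|i g IH|i g IH] u /=; first exact: hP.
- by split=> -[a Ha]; exists a; apply/IH.
- by split=> Ha a; apply/IH.
Qed.

Fixpoint matrix (f : pform C) : qf C :=
  match f with PQF q => q | PEx _ g | PAll _ g => matrix g end.

Lemma pfmap_free D (h : qf C -> qf D) (S : nat -> Prop) f :
  (forall i, qf_free i (h (matrix f)) -> qf_free i (matrix f) \/ S i) ->
  forall i, pform_free i (pfmap h f) -> pform_free i f \/ S i.
Proof.
elim: f => [q|j g IH|j g IH] hS i /=; first exact: hS.
all: by case/andP=> ne_ji /(IH hS) [free_i|S_i]; [left; rewrite ne_ji | right].
Qed.

Lemma pfmap_class D (h : qf C -> qf D) n :
  (forall f, is_sigma n f -> is_sigma n (pfmap h f)) /\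
  (forall f, is_pi_aux n f -> is_pi_aux n (pfmap h f)).
Proof.
elim: n => [|n [IHs IHp]]; first by split=> -[].
split; elim=> [q|i g IH|i g IH] /=.
all: case=> H; [left | right]; by [apply: (IHp _ H) | apply: (IHs _ H) | apply: IH | case: H].
Qed.

Lemma class_mono n :
  (forall f, is_sigma n f -> is_sigma n.+1 f) /\ (forall f, is_pi_aux n f -> is_pi_aux n.+1 f).
Proof.
elim: n => [|n [IHs IHp]]; first by split=> -[q|i g|i g] H; left.
split; elim=> [q|i g IH|i g IH] /=.
all: case=> H; [left | right]; by [apply: (IHp _ H) | apply: (IHs _ H) | apply: IH | case: H].
Qed.

Lemma sigma_PEx n i g : is_sigma n (PEx i g) -> is_sigma n g.
Proof.
elim: n {-2}n (leqnn n) i g => [|m IH] n le_nm i g; first by case: n le_nm.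
case: n le_nm => [|[|n]] // le_nm [H|//]; first by case: H.
case: H => [H|//].
apply/(proj1 (class_mono n.+1))/(proj1 (class_mono n)).
by apply: (IH n _ i g H); lia.
Qed.

Definition exs (X : seq nat) g : pform C := foldr (fun i h => PEx i h) g X.

Lemma sat_exs (I : C -> part) X g v :
  sat I v (exs X g) <-> exists v', (forall i, i \notin X -> v' i = v i) /\ sat I v' g.
Proof.
elim: X v => [|x X IH] v /=.
  by split=> [H|[v' [E H]]]; [exists v | rewrite -(sat_agree _ (fun i _ => E i isT))].
split=> [[a /IH [v' [E H]]]|[v' [E H]]].
  exists v'; split=> // i; rewrite in_cons negb_or => /andP [ne_ix notin_i].
  by rewrite E // upd_ne.
exists (v' x); apply/IH; exists v'; split=> // i notin_i.
rewrite /upd; case: eqP => [->//|/eqP ne_ix]; apply: E; by rewrite in_cons negb_or ne_ix.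
Qed.

Lemma free_exs X g i : pform_free i (exs X g) -> i \notin X /\ pform_free i g.
Proof.
elim: X => [|x X IH] //= /andP [ne_xi /IH [notin_i free_i]].
by rewrite in_cons negb_or eq_sym ne_xi.
Qed.

Lemma exs_sigma n X g : is_sigma n.+1 g -> is_sigma n.+1 (exs X g).
Proof. by elim: X => [|x X IH] //= H; right; apply: IH. Qed.
End Prenex.

Definition term_vmax C (t : term C) : nat := if t is TVar i then i else 0.

Fixpoint qf_vmax C (q : qf C) : nat :=
  match q with
  | QLe t1 t2 | QEq t1 t2 => maxn (term_vmax t1) (term_vmax t2)
  | QNot q => qf_vmax q
  | QAnd q1 q2 | QOr q1 q2 => maxn (qf_vmax q1) (qf_vmax q2)
  end.

Fixpoint pform_vmax C (f : pform C) : nat :=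
  match f with PQF q => qf_vmax q | PEx i g | PAll i g => maxn i (pform_vmax g) end.

Lemma pform_free_vmax C i (f : pform C) : pform_free i f -> i <= pform_vmax f.
Proof.
elim: f => [q|j g IH|j g IH] /=; last 2 first.
- by case/andP=> _ /IH; rewrite leq_max orbC => ->.
- by case/andP=> _ /IH; rewrite leq_max orbC => ->.
have term_max (t : term C) : term_free i t -> i <= term_vmax t by case: t => //= j /eqP ->.
elim: q => [t1 t2|t1 t2|q IH|q1 IH1 q2 IH2|q1 IH1 q2 IH2] //=.
1,2: by rewrite leq_max => /orP [/term_max|/term_max] ->; rewrite ?orbT.
all: by rewrite leq_max => /orP [/IH1|/IH2] ->; rewrite ?orbT.
Qed.

(* Quantifier-free formulas of Y^*.  Variable 0 is reserved for a probe [a]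
   that will be universally quantified. *)
Notation satq := (sat_qf Ystar_const).
Definition V (l : nat) : term unit := TVar l.
Definition c11 : term unit := TCst tt.
Definition qtrue : qf unit := QEq c11 c11.
Definition qlt (x y : term unit) : qf unit := QAnd (QLe x y) (QNot (QEq x y)).
Definition qimp (x y : qf unit) : qf unit := QOr (QNot x) y.

Definition qconj (s : seq nat) (g : nat -> qf unit) : qf unit :=
  foldr (fun i acc => QAnd (g i) acc) qtrue s.

Lemma sat_qconj v s g : satq v (qconj s g) <-> forall i, i \in s -> satq v (g i).
Proof.
elim: s => [|x s IH] /=; first by split.
rewrite IH; split=> [[gx gs] i|all_g]; first by rewrite inE => /orP [/eqP ->|/gs].
by split=> [|i s_i]; apply: all_g; rewrite inE ?eqxx ?s_i ?orbT.
Qed.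

Definition vars_below m (t : term unit) : Prop := qf_vars_in (fun i => i < m) t.

Lemma vars_below_V m x : x < m -> vars_below m (V x).
Proof. by move=> lt_xm i /eqP <-. Qed.

Lemma qf_all_qconj (P : term unit -> Prop) s g : P c11 ->
  (forall i, i \in s -> qf_all P (g i)) -> qf_all P (qconj s g).
Proof.
move=> P_c11; elim: s => [|x s IH] all_g //=.
by split; [apply: all_g; rewrite inE eqxx | apply: IH => i si; apply: all_g; rewrite inE si orbT].
Qed.

(* [chain F K e] says, for the probe [a]: x_{F 0} lies below [a], and for each
   [b < K], x_{F b.+1} covers x_{F b} (no probe lies strictly between them) and
   is not above [e].  Holding for all probes, it pins down x_{F 0}, ..., x_{F K}
   as the first members of a chain as in section [ChainBelow]. *)
Definition chain (F : nat -> nat) (K : nat) (e : term unit) : qf unit :=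
  QAnd (QLe (V (F 0)) (V 0))
   (qconj (iota 0 K) (fun b => QAnd (qlt (V (F b)) (V (F b.+1)))
      (QAnd (QNot (QAnd (qlt (V (F b)) (V 0)) (qlt (V 0) (V (F b.+1)))))
            (QNot (QLe e (V (F b.+1))))))).

Section ChainFormula.
Variables (F : nat -> nat) (K : nat) (e : term unit) (rho : nat -> part).
Variables (E : part) (G : nat -> part).
Hypothesis F_neq0 : forall b, F b != 0.
Hypothesis e_val : forall a, eval_term Ystar_const (upd rho 0 a) e = E.
Hypothesis G0_bot : forall w, part_le (G 0) w.
Hypothesis G_le : forall i j, part_le (G i) (G j) <-> i <= j.
Hypothesis not_above_E : forall y, ~ part_le E y <-> exists k, y = G k.

Lemma chain_sem a : satq (upd rho 0 a) (chain F K e) <->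
  part_le (rho (F 0)) a /\ forall b, b < K ->
   [/\ part_lt (rho (F b)) (rho (F b.+1)),
       ~ (part_lt (rho (F b)) a /\ part_lt a (rho (F b.+1))) &
       ~ part_le E (rho (F b.+1))].
Proof.
have rhoF b : upd rho 0 a (F b) = rho (F b) by apply: upd_ne.
rewrite /chain /= sat_qconj /= upd_eq e_val rhoF.
split=> -[F0_a chain_a]; split=> // b; rewrite ?mem_iota => /= lt_bK;
  move: (chain_a b); rewrite ?mem_iota /= !rhoF => /(_ lt_bK).
- by case=> ? [? ?]; split.
- by case.
Qed.

Lemma chain_spec : (forall a, satq (upd rho 0 a) (chain F K e)) <->
  forall b, b <= K -> rho (F b) = G b.
Proof.
split=> [chain_all|rhoF a].
  have [F0_bot F_steps] := proj1 (chain_sem (G 0)) (chain_all (G 0)).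
  elim=> [|b IH] le_bK; first exact: part_le_anti F0_bot (G0_bot _).
  have [lt_b _ not_above] := F_steps b le_bK.
  apply: (chain_cover_unique G_le not_above_E _ not_above).
  rewrite -IH ?(ltnW le_bK) //; split=> // w.
  by have [_ /(_ b le_bK) []] := proj1 (chain_sem w) (chain_all w).
apply/chain_sem; split=> [|b lt_bK]; first by rewrite rhoF.
rewrite !rhoF ?(ltnW lt_bK) //.
have [? ?] := chain_covers G_le not_above_E b.
by split=> //; apply/not_above_E; exists b.+1.
Qed.
End ChainFormula.

Lemma chain_below m F K e : 0 < m -> (forall b, b <= K -> F b < m) -> vars_below m e ->
  qf_all (vars_below m) (chain F K e).
Proof.
move=> m_gt0 F_lt e_below; rewrite /chain /=.
split; first by split; apply: vars_below_V => //; apply: F_lt.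
apply: qf_all_qconj => // b; rewrite mem_iota /= => lt_bK.
have ? := F_lt b (ltnW lt_bK); have ? := F_lt b.+1 lt_bK.
by repeat split; try apply: vars_below_V.
Qed.

Definition maxdef (s : seq nat) (x : nat) : qf unit :=
  QAnd (qconj s (fun y => QNot (QLe (V y) (V x))))
       (qimp (qconj s (fun y => QNot (QLe (V y) (V 0)))) (QLe (V 0) (V x))).

Lemma maxdef_sem s x rho (A : part -> Prop) : 0 \notin s -> x != 0 ->
  (forall w, A w <-> forall y, y \in s -> ~ part_le (rho y) w) ->
  (forall a, satq (upd rho 0 a) (maxdef s x)) <-> is_max A (rho x).
Proof.
move=> s_neq0 x_neq0 A_def.
have avoid a z : satq (upd rho 0 a) (qconj s (fun y => QNot (QLe (V y) (V z)))) <->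
                 A (upd rho 0 a z).
  rewrite sat_qconj A_def; split=> avoid_z y ys; have y_neq0 := memPn s_neq0 y ys;
  by move: (avoid_z y ys) => /=; rewrite [upd _ _ _ y]upd_ne.
have [avoid_x avoid_0] := (fun a => avoid a x, fun a => avoid a 0).
rewrite /maxdef /=; split=> [max_all|[Ax max_x] a].
  have [/avoid_x Ax _] := max_all part_empty; rewrite upd_ne // in Ax.
  split=> // w Aw; case: (max_all w) => _ [] /=; last by rewrite upd_eq upd_ne.
  by case; apply/avoid_0; rewrite upd_eq.
split; first by apply/avoid_x; rewrite upd_ne.
rewrite /= upd_eq upd_ne //.
case: (classic (A a)) => [/max_x|not_Aa]; first by right.
by left => /avoid_0; rewrite upd_eq.
Qed.

Lemma maxdef_below m s x : 0 < m -> x < m -> (forall y, y \in s -> y < m) ->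
  qf_all (vars_below m) (maxdef s x).
Proof.
move=> m_gt0 lt_xm s_lt.
by split; [|split; [|split]]; try apply: qf_all_qconj => // y /s_lt ? /=;
  repeat split; apply: vars_below_V.
Qed.

(* Auxiliary variables of the defining formula of a partition [p]: row [b],
   column [a] and rectangle [i] are stored in three interleaved families. *)
Definition aux_var (kind m : nat) : nat := (m * 3 + kind).+2.
Definition row_var := aux_var 0.
Definition col_var := aux_var 1.
Definition rect_var := aux_var 2.

(* [Phi p] in the variables 0 (probe), 1 (target) and the auxiliaries.  Holding
   for every probe, it forces x_1 = p: the rows and columns are the chains
   below (1,1) and (2) (the latter being row 2), each rectangle
   [rect i.+1 (p_i).+1] is the greatest partition avoiding a row and a column,
   and [p] is the greatest partition avoiding these rectangles. *)
Definition Phi_rows (p : part) : qf unit := chain row_var (part_nth p 0).+2 c11.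
Definition Phi_cols (p : part) : qf unit := chain col_var (psize p).+2 (V (row_var 2)).
Definition Phi_rect (p : part) (i : nat) : qf unit :=
  maxdef [:: row_var (part_nth p i).+2; col_var i.+2] (rect_var i).
Definition Phi_target (p : part) : qf unit := maxdef (map rect_var (iota 0 (psize p).+1)) 1.

Definition Phi (p : part) : qf unit :=
  QAnd (Phi_rows p) (QAnd (Phi_cols p)
    (QAnd (qconj (iota 0 (psize p).+1) (Phi_rect p)) (Phi_target p))).

Lemma rows_spec rho p : (forall a, satq (upd rho 0 a) (Phi_rows p)) <->
  forall b, b <= (part_nth p 0).+2 -> rho (row_var b) = rect 1 b.
Proof.
apply: (@chain_spec row_var _ c11 rho (rect 2 1) (rect 1)) => //.
- by move=> a; rewrite /= /Ystar_const part_11_rect.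
- exact: row_le.
- exact: not_above_11.
Qed.

Lemma cols_spec rho (p : part) : rho (row_var 2) = rect 1 2 ->
  (forall a, satq (upd rho 0 a) (Phi_cols p)) <->
  forall a, a <= (psize p).+2 -> rho (col_var a) = rect a 1.
Proof.
move=> row2; apply: (@chain_spec col_var _ _ rho (rect 1 2) (fun a => rect a 1)) => //.
- exact: col_le.
- exact: not_above_2.
Qed.

Section PhiLayout.
Variables (p : part) (rho : nat -> part).
Hypothesis rows : forall b, b <= (part_nth p 0).+2 -> rho (row_var b) = rect 1 b.
Hypothesis cols : forall a, a <= (psize p).+2 -> rho (col_var a) = rect a 1.

Lemma rect_var_spec i : i <= psize p ->
  (forall a, satq (upd rho 0 a) (Phi_rect p i)) <->
  rho (rect_var i) = rect i.+1 (part_nth p i).+1.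
Proof.
move=> le_is; rewrite (@maxdef_sem _ _ _ (avoids_rc i.+1 (part_nth p i).+1)) //.
  by split=> [/is_max_unique/(_ (rect_is_max _ _))|->] //; apply: rect_is_max.
have row_i : rho (row_var (part_nth p i).+2) = rect 1 (part_nth p i).+2
  by rewrite rows // !ltnS part_nth_mono.
have col_i : rho (col_var i.+2) = rect i.+2 1 by rewrite cols // !ltnS.
move=> w; rewrite /avoids_rc -row_i -col_i.
split=> [[no_row no_col] y|avoid]; first by rewrite !inE => /orP [] /eqP ->.
by split; apply: avoid; rewrite !inE eqxx ?orbT.
Qed.

Hypothesis rects : forall i, i <= psize p -> rho (rect_var i) = rect i.+1 (part_nth p i).+1.

Lemma target_spec : (forall a, satq (upd rho 0 a) (Phi_target p)) <-> rho 1 = p.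
Proof.
rewrite (@maxdef_sem _ _ _ (avoids_corners p)) //.
- by split=> [/is_max_unique/(_ (part_is_max p))|->] //; apply: part_is_max.
- by apply/mapP => -[i _].
move=> w; split=> [avoid y /mapP [i]|avoid i le_is].
  by rewrite mem_iota ltnS => /= le_is ->; rewrite rects //; apply: avoid.
by rewrite -rects //; apply: avoid; apply/mapP; exists i; rewrite // mem_iota ltnS.
Qed.
End PhiLayout.

Lemma Phi_sound p rho : (forall a, satq (upd rho 0 a) (Phi p)) -> rho 1 = p.
Proof.
move=> Phi_all.
have rows := proj1 (rows_spec rho p) (fun a => proj1 (Phi_all a)).
have cols := proj1 (cols_spec p (rows 2 isT)) (fun a => proj1 (proj2 (Phi_all a))).
have rects i : i <= psize p -> rho (rect_var i) = rect i.+1 (part_nth p i).+1.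
  move=> le_is; apply/(rect_var_spec rows cols le_is) => a.
  have rect_all : satq (upd rho 0 a) (qconj (iota 0 (psize p).+1) (Phi_rect p))
    := proj1 (proj2 (proj2 (Phi_all a))).
  by apply: (proj1 (sat_qconj _ _ _) rect_all); rewrite mem_iota.
exact: (proj1 (target_spec rects)) (fun a => proj2 (proj2 (proj2 (Phi_all a)))).
Qed.

Definition aux_value (p : part) (kind m : nat) : part :=
  match kind with 0 => rect 1 m | 1 => rect m 1 | _ => rect m.+1 (part_nth p m).+1 end.

Definition Phi_witness (p : part) (l : nat) : part :=
  if l is l'.+2 then aux_value p (l' %% 3) (l' %/ 3) else p.

Lemma Phi_witness_aux p kind m : kind < 3 -> Phi_witness p (aux_var kind m) = aux_value p kind m.
Proof. by move=> lt_k3; rewrite /= modnMDl divnMDl // modn_small // divn_small // addn0. Qed.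

Lemma Phi_complete p a : satq (upd (Phi_witness p) 0 a) (Phi p).
Proof.
have rows b (_ : b <= (part_nth p 0).+2) : Phi_witness p (row_var b) = rect 1 b
  by rewrite Phi_witness_aux.
have cols a' (_ : a' <= (psize p).+2) : Phi_witness p (col_var a') = rect a' 1
  by rewrite Phi_witness_aux.
have rects i (_ : i <= psize p) : Phi_witness p (rect_var i) = rect i.+1 (part_nth p i).+1
  by rewrite Phi_witness_aux.
split; first exact: (proj2 (rows_spec _ p) rows).
split; first exact: (proj2 (cols_spec p (rows 2 isT)) cols).
split; last exact: (proj2 (target_spec rects)).
apply/sat_qconj => i; rewrite mem_iota ltnS => le_is.
exact: (proj2 (rect_var_spec rows cols le_is) (rects i le_is)).
Qed.

Definition Phi_span (p : part) : nat := (part_nth p 0 + psize p) * 3 + 10.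

Lemma Phi_below p : qf_all (vars_below (Phi_span p)) (Phi p).
Proof.
have p_i i : part_nth p i <= part_nth p 0 by apply: part_nth_mono.
rewrite /Phi_span.
split; first by apply: chain_below => [|b|i //]; rewrite /row_var /aux_var; lia.
split; first by apply: chain_below => [|b|]; rewrite /row_var /col_var /aux_var;
  [lia | lia | apply: vars_below_V; lia].
split.
  apply: qf_all_qconj => // i; rewrite mem_iota => /andP [_ le_is].
  have p_i0 := p_i i; apply: maxdef_below => [||y]; rewrite /rect_var /aux_var; try lia.
  by rewrite !inE => /orP [] /eqP ->; rewrite /row_var /col_var /aux_var; lia.
apply: maxdef_below => [||y /mapP [i]]; try lia.
by rewrite mem_iota => /andP [_ ?] ->; rewrite /rect_var /aux_var; lia.
Qed.

Definition rename_term (r : nat -> nat) (t : term unit) : term unit :=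
  if t is TVar i then TVar (r i) else t.

Lemma sat_rename r u q : satq u (qmap (rename_term r) q) <-> satq (fun l => u (r l)) q.
Proof. by apply: qmap_sat; apply: qf_allT => -[]. Qed.

Definition term_consts C (t : term C) : seq C := if t is TCst c then [:: c] else [::].

Fixpoint qf_consts C (q : qf C) : seq C :=
  match q with
  | QLe t1 t2 | QEq t1 t2 => term_consts t1 ++ term_consts t2
  | QNot q => qf_consts q
  | QAnd q1 q2 | QOr q1 q2 => qf_consts q1 ++ qf_consts q2
  end.

Definition const_in (cs : seq part) (t : term part) : Prop :=
  if t is TCst c then c \in cs else True.

Lemma qf_consts_in cs (q : qf part) : {subset qf_consts q <= cs} -> qf_all (const_in cs) q.
Proof.
have term_in (t : term part) : {subset term_consts t <= cs} -> const_in cs t.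
  by case: t => //= c; apply; rewrite inE.
elim: q => [t1 t2|t1 t2|q IH|q1 IH1 q2 IH2|q1 IH1 q2 IH2] //= sub.
1,2: by split; apply: term_in => c c_t; apply: sub; rewrite mem_cat c_t ?orbT.
all: by split; [apply: IH1 | apply: IH2] => c c_q; apply: sub; rewrite mem_cat c_q ?orbT.
Qed.

(* Eliminating the constants [cs] of a formula whose variables are below [N]:
   the j-th constant becomes the variable [N + j.+1], [N] is the probe, and
   the auxiliary variables of the defining formula of the j-th constant are
   interleaved in a block above [N]. *)
Section ConstantElimination.
Variables (N : nat) (cs : seq part).

Definition const_term (t : term part) : term unit :=
  match t with TVar i => TVar i | TCst c => TVar (N + (index c cs).+1) end.

Definition consts_held (u : nat -> part) :=
  forall j, j < size cs -> u (N + j.+1) = nth part_empty cs j.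

Lemma sat_const_term u q : consts_held u -> qf_all (const_in cs) q ->
  satq u (qmap const_term q) <-> sat_qf Yall_const u q.
Proof.
move=> held cs_q; apply: qmap_sat; apply: qf_all_impl cs_q => -[i|c] //= c_in.
by rewrite held ?index_mem // nth_index.
Qed.

Lemma sat_consts u (f : pform part) : pform_vmax f < N -> qf_all (const_in cs) (matrix f) -> consts_held u ->
  sat Ystar_const u (pfmap (qmap const_term) f) <-> sat Yall_const u f.
Proof.
elim: f u => [q|i g IH|i g IH] u /= lt_fN cs_f held; first exact: sat_const_term.
all: have held_upd a : consts_held (upd u i a)
       by move=> j lt_j; rewrite upd_ne ?held //; apply/eqP; lia.
all: have lt_gN : pform_vmax g < N by lia.
- by split=> -[a Ha]; exists a; apply/IH.
- by split=> Ha a; apply/IH.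
Qed.

Definition span : nat := \max_(c <- cs) Phi_span c.

Lemma span_ge j : j < size cs -> Phi_span (nth part_empty cs j) <= span.
Proof. by move=> lt_j; apply: leq_bigmax_seq; rewrite ?mem_nth. Qed.

Definition block : seq nat := iota N.+1 (span * size cs).

Lemma consts_in_block j : j < size cs -> N + j.+1 \in block.
Proof.
move=> lt_j; have := span_ge lt_j; rewrite /Phi_span => span_pos.
have : size cs <= span * size cs by apply: leq_pmull; lia.
by rewrite mem_iota; lia.
Qed.

Lemma const_term_free q i : qf_all (const_in cs) q ->
  qf_free i (qmap const_term q) -> qf_free i q \/ i \in block.
Proof.
move=> cs_q; move: i; apply: (qmap_free_in (S := fun i => qf_free i q \/ i \in block)).
apply: qf_all_impl (qf_all_and (qf_all_free q) cs_q) => -[l|c] [free_t c_in] j /= /eqP <-.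
  by left; apply: (free_t l (eqxx l)).
by right; apply: consts_in_block; rewrite index_mem.
Qed.

Definition aux_rename (j l : nat) : nat := if l is l'.+1 then N + (l' * size cs + j).+1 else N.

Lemma aux_rename_block j l : j < size cs -> l < span ->
  aux_rename j l = N \/ aux_rename j l \in block.
Proof.
case: l => [|l] lt_j lt_l; first by left.
right.
have := leq_mul lt_l (leqnn (size cs)).
by rewrite mulSn mem_iota /=; lia.
Qed.

Lemma rename_upd u a j l : upd u N a (aux_rename j l) = upd (fun l => u (aux_rename j l)) 0 a l.
Proof. by case: l => [|l]; rewrite /upd /= ?eqxx // ifF //; apply/eqP; lia. Qed.

Definition consts_def : qf unit :=
  qconj (iota 0 (size cs))
    (fun j => qmap (rename_term (aux_rename j)) (Phi (nth part_empty cs j))).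

Lemma consts_def_free i : qf_free i consts_def -> i = N \/ i \in block.
Proof.
move: i; apply: (qf_free_in (S := fun i => i = N \/ i \in block)).
apply: qf_all_qconj => // j; rewrite mem_iota add0n => /andP [_ lt_j].
apply: qf_all_qmap; apply: qf_all_impl (Phi_below _) => -[l|c] //= l_below i /eqP <-.
by apply: aux_rename_block => //; apply: leq_trans (l_below l (eqxx l)) (span_ge lt_j).
Qed.

Lemma consts_def_ge i : qf_free i consts_def -> N <= i.
Proof. by case/consts_def_free=> [->|]; rewrite ?mem_iota //; lia. Qed.

Lemma consts_def_sound u : (forall a, satq (upd u N a) consts_def) -> consts_held u.
Proof.
move=> def_all j lt_j.
have -> : N + j.+1 = aux_rename j 1 by rewrite /= mul0n.
apply: (Phi_sound (rho := fun l => u (aux_rename j l))) => a.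
have := proj1 (sat_qconj _ _ _) (def_all a) j; rewrite mem_iota add0n lt_j => /(_ isT).
move/sat_rename.
exact: (proj1 (satq_agree _ (fun l _ => rename_upd u a j l))).
Qed.

Definition block_witness (u : nat -> part) (i : nat) : part :=
  if i \in block then
    Phi_witness (nth part_empty cs ((i - N.+1) %% size cs)) ((i - N.+1) %/ size cs).+1
  else u i.

Lemma block_witness_rename u j l : j < size cs -> l.+1 < span ->
  block_witness u (aux_rename j l.+1) = Phi_witness (nth part_empty cs j) l.+1.
Proof.
move=> lt_j lt_l; have [/= ?|in_b] := aux_rename_block lt_j lt_l; first lia.
rewrite /block_witness in_b.
have -> : aux_rename j l.+1 - N.+1 = l * size cs + j by rewrite /=; lia.
by rewrite modnMDl modn_small // divnMDl ?divn_small ?addn0 //; lia.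
Qed.

Lemma consts_def_complete u a : satq (upd (block_witness u) N a) consts_def.
Proof.
apply/sat_qconj => j; rewrite mem_iota add0n => /andP [_ lt_j]; apply/sat_rename.
apply: (proj1 (satq_agree _ _) (Phi_complete _ a)) => -[|l] free_l.
  by rewrite rename_upd.
have lt_l : l.+1 < span.
  exact: leq_trans (qf_free_in (Phi_below _) free_l) (span_ge lt_j).
by rewrite rename_upd !upd_ne // block_witness_rename.
Qed.

Lemma held_upd u a : consts_held u -> consts_held (upd u N a).
Proof. by move=> held j lt_j; rewrite upd_ne ?held //; apply/eqP; lia. Qed.

Lemma below_block i : i < N -> i \notin block.
Proof. by rewrite mem_iota; lia. Qed.

(* Conjoining [consts_def] to the matrix: its variables lie at or above [N],
   so it floats out of the quantifiers of [f]. *)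
Definition add_defs (f : pform part) : pform unit :=
  pfmap (fun q => QAnd consts_def (qmap const_term q)) f.

Lemma sat_add_defs (f : pform part) u : pform_vmax f < N ->
  sat Ystar_const u (add_defs f) <->
  satq u consts_def /\ sat Ystar_const u (pfmap (qmap const_term) f).
Proof.
elim: f u => [q|i g IH|i g IH] u /= lt_fN; first by [].
all: have def_upd a : satq (upd u i a) consts_def <-> satq u consts_def
       by apply: satq_agree => l /consts_def_ge le_Nl; apply: upd_ne; apply/eqP; lia.
all: have lt_gN : pform_vmax g < N by lia.
- split=> [[a /IH [] // /def_upd defs sat_g]|[defs [a sat_g]]]; first by split=> //; exists a.
  by exists a; apply/IH => //; split=> //; apply/def_upd.
- split=> [sat_all|[defs sat_g] a]; last by apply/IH => //; split=> //; apply/def_upd.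
  split=> [|a]; last by have /IH [] := sat_all a.
  by have /IH [] // := sat_all part_empty; move/def_upd.
Qed.

Definition defs_block (f : pform part) : pform unit := exs block (PAll N (add_defs f)).

Lemma defs_block_sat (f : pform part) v : pform_vmax f < N -> {subset qf_consts (matrix f) <= cs} ->
  sat Ystar_const v (defs_block f) <-> sat Yall_const v f.
Proof.
move=> lt_fN sub_cs; have cs_f := qf_consts_in sub_cs.
have agree_low w : (forall i, i < N -> w i = v i) -> sat Yall_const w f <-> sat Yall_const v f.
  by move=> low; apply: sat_agree => i /pform_free_vmax ?; apply: low; lia.
rewrite sat_exs /=; split=> [[v' [out_v' def_all]]|sat_f].
  have held : consts_held v'.
    by apply: consts_def_sound => a; case: (proj1 (sat_add_defs _ lt_fN) (def_all a)).
  have [_ sat_f] := proj1 (sat_add_defs _ lt_fN) (def_all part_empty).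
  have low i : i < N -> upd v' N part_empty i = v i.
    by move=> lt_iN; rewrite upd_ne ?out_v' ?below_block //; apply/eqP; lia.
  apply: (proj1 (agree_low _ low)).
  by apply/(sat_consts lt_fN cs_f) => //; apply: held_upd.
exists (block_witness v); split=> [i /negbTE out_i|a]; first by rewrite /block_witness out_i.
apply/sat_add_defs => //; split; first exact: consts_def_complete.
apply/(sat_consts lt_fN cs_f); first by apply/held_upd/consts_def_sound/consts_def_complete.
apply/agree_low => // i lt_iN; rewrite upd_ne; last by apply/eqP; lia.
by rewrite /block_witness (negbTE (below_block lt_iN)).
Qed.

Lemma defs_block_free (f : pform part) i : {subset qf_consts (matrix f) <= cs} ->
  pform_free i (defs_block f) -> pform_free i f.
Proof.
move=> sub_cs /free_exs [not_block /= /andP [ne_Ni]].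
case/(pfmap_free (S := fun i => i = N \/ i \in block)) => [l||[E|in_b]] //.
- by rewrite /=; case/orP=> [/consts_def_free|/(const_term_free (qf_consts_in sub_cs))]; tauto.
- by rewrite E eqxx in ne_Ni.
- by rewrite in_b in not_block.
Qed.

Lemma defs_block_sigma n (f : pform part) : is_pi_aux n.+1 f -> is_sigma n.+2 (defs_block f).
Proof. by move=> pi_f; apply: exs_sigma; left; right; apply: (proj2 (pfmap_class _ n.+1)). Qed.

Fixpoint elim_consts (f : pform part) : pform unit :=
  match f with PEx i g => PEx i (elim_consts g) | _ => defs_block f end.

Lemma elim_consts_sat (f : pform part) v : pform_vmax f < N ->
  {subset qf_consts (matrix f) <= cs} ->
  sat Ystar_const v (elim_consts f) <-> sat Yall_const v f.
Proof.
elim: f v => [q|i g IH|i g IH] v; try exact: defs_block_sat.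
move=> /= lt_fN sub_cs; have lt_gN : pform_vmax g < N by lia.
by split=> -[a Ha]; exists a; apply/IH.
Qed.

Lemma elim_consts_free (f : pform part) i : {subset qf_consts (matrix f) <= cs} ->
  pform_free i (elim_consts f) -> pform_free i f.
Proof.
elim: f => [q|j g IH|j g IH] sub_cs; try exact: defs_block_free.
by rewrite /= => /andP [ne_ji /(IH sub_cs) free_g]; rewrite ne_ji.
Qed.

Lemma elim_consts_sigma n (f : pform part) : is_sigma n.+2 f -> is_sigma n.+2 (elim_consts f).
Proof.
elim: f => [q|i g IH|i g IH] sigma_f.
- by apply: defs_block_sigma; case: sigma_f.
- by right; apply/IH/(sigma_PEx sigma_f).
- by apply: defs_block_sigma; case: sigma_f.
Qed.
End ConstantElimination.

Definition name_11 (t : term unit) : term part := if t is TVar i then TVar i else TCst part_11.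

Lemma sat_name_11 u q : sat_qf Yall_const u (qmap name_11 q) <-> satq u q.
Proof. by apply: qmap_sat; apply: qf_allT => -[]. Qed.

Lemma name_11_free q i : qf_free i (qmap name_11 q) -> qf_free i q.
Proof.
move: i; apply: (qmap_free_in (S := fun i => qf_free i q)).
by apply: qf_all_impl (qf_all_free q) => -[l|c] //= free_l j /eqP <-; apply: (free_l l).
Qed.

Theorem corollary5p2 :
  forall n : nat, 4 <= n ->
  forall (k : nat) (R : ('I_k -> part) -> Prop),
    sigma_definable Ystar_const n R <-> sigma_definable Yall_const n R.
Proof.
move=> n le4n k R; split=> -[f [sigma_f [free_f def_R]]].
  exists (pfmap (qmap name_11) f); split; first exact: (proj1 (pfmap_class _ n)).
  split=> [i|a]; last by rewrite def_R; symmetry; apply: pfmap_sat => u q; apply: sat_name_11.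
  by case/(pfmap_free (S := fun _ => False)) => [j /name_11_free ?|/free_f|[]] //; left.
set N := (pform_vmax f).+1; set cs := qf_consts (matrix f).
exists (elim_consts N cs f); split.
  by case: n le4n sigma_f => [|[|n]] // _; apply: elim_consts_sigma.
split=> [i /elim_consts_free free_i|a]; first exact/free_f/free_i.
by rewrite def_R elim_consts_sat.
Qed.
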